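(* Let $q\ge 2$, $n\ge 1$, let $\mathcal C\subseteq \triangle_n^{q-1}$ be a multiset code, let $h_{\rm ins},h_{\rm del},h_{\rm sub}$ be non-negative integers and set $h=h_{\rm ins}+h_{\rm del}+2h_{\rm sub}$. The following are equivalent: (a) $\mathcal C$ can correct $h_{\rm ins}$ insertions, $h_{\rm del}$ deletions and $h_{\rm sub}$ substitutions; (b) $\mathcal C$ can correct $h$ insertions; (c) $\mathcal C$ can correct $h$ deletions.
   Context: Alphabet $[q]=\{0,1,\dots,q-1\}$, $q\ge2$. A multiset over $[q]$ is identified with its multiplicity vector $\mathbf x=(x_0,\dots,x_{q-1})\in\mathbb Z^q$, $x_i$ = number of copies of symbol $i$. $\triangle_n^{q-1}=\{\mathbf x\in\mathbb Z^q: x_i\ge0,\ \sum_{i=0}^{q-1}x_i=n\}$ (multisets of cardinality $n$). A multiset code of length $n$ over $[q]$ is a subset of $\triangle_n^{q-1}$ with at least two elements. Errors act on the multiset: a deletion removes one element present in the multiset (i.e. $\mathbf x\mapsto \mathbf x-\mathbf e_i$ for some $i$ with current multiplicity $\ge1$), an insertion adds one symbol $i\in[q]$ ($\mathbf x\mapsto\mathbf x+\mathbf e_i$), a substitution replaces one present element $i$ by a symbol $j$ ($\mathbf x\mapsto \mathbf x-\mathbf e_i+\mathbf e_j$); $\mathbf e_i$ is the $i$-th unit vector. A code can correct $a$ insertions, $b$ deletions and $c$ substitutions if no two distinct codewords can yield the same output multiset after being impaired by arbitrary patterns of at most $a$ insertions, at most $b$ deletions and at most $c$ substitutions; ''correct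 $h$ deletions'' means the case $a=c=0,b=h$, and similarly for insertions. *)

From mathcomp Require Import all_boot.
Set Implicit Arguments. Unset Strict Implicit. Unset Printing Implicit Defensive.

(* A multiset over [q] = {0,..,q-1} is its multiplicity vector x : 'I_q -> nat. *)
Definition mvec (q : nat) := {ffun 'I_q -> nat}.

Definition in_simplex (q n : nat) (x : mvec q) : Prop := \sum_(i < q) x i = n.

Definition add_unit (q : nat) (x : mvec q) (i : 'I_q) : mvec q :=
  [ffun k => x k + (k == i)].
Definition sub_unit (q : nat) (x : mvec q) (i : 'I_q) : mvec q :=
  [ffun k => x k - (k == i)].

Definition ins_step (q : nat) (x y : mvec q) : Prop :=
  exists i : 'I_q, y = add_unit x i.
Definition del_step (q : nat) (x y : mvec q) : Prop :=
  exists i : 'I_q, 1 <= x i /\ y = sub_unit x i.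
Definition sub_step (q : nat) (x y : mvec q) : Prop :=
  exists (i j : 'I_q), 1 <= x i /\ y = add_unit (sub_unit x i) j.

Inductive impaired (q : nat) : nat -> nat -> nat -> mvec q -> mvec q -> Prop :=
| imp_refl a b c x : impaired a b c x x
| imp_ins a b c x y z : ins_step x y -> impaired a b c y z -> impaired a.+1 b c x z
| imp_del a b c x y z : del_step x y -> impaired a b c y z -> impaired a b.+1 c x z
| imp_sub a b c x y z : sub_step x y -> impaired a b c y z -> impaired a b c.+1 x z.

Definition multiset_code (q n : nat) (C : mvec q -> Prop) : Prop :=
  (forall x, C x -> in_simplex n x) /\
  exists x y, [/\ C x, C y & x <> y].

Definition can_correct (q : nat) (C : mvec q -> Prop) (a b c : nat) : Prop :=
  forall x y z, C x -> C y -> x <> y ->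
    impaired a b c x z -> impaired a b c y z -> False.

From mathcomp Require Import all_boot zify.

Set Implicit Arguments.
Unset Strict Implicit.
Unset Printing Implicit Defensive.

(* For multisets x, y let [excess x y] be the number of elements of x missing
   from y; when x and y have the same cardinality it is symmetric.  Along any
   pattern of a insertions, b deletions and c substitutions the input loses at
   most b + c elements and gains at most a + c, so by the triangle inequality
   two codewords with a common output have excess at most a + b + 2c.
   Conversely, if the excess of x over y is at most a + b + 2c, each insertion
   or deletion performed on both words, and each substitution performed on one
   word, lowers it by one, so a common output is reached within the budget.
   Hence the correction capability depends only on a + b + 2c. *)

Section Excess.
Variable q : nat.
Implicit Types x y z : mvec q.

Definition mcard x := \sum_(k < q) x k.

Definition excess x y := \sum_(k < q) (x k - y k).

Lemma sum_indicator (i : 'I_q) : \sum_(k < q) ((k == i) : nat) = 1.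
Proof. by rewrite (bigD1 i) //= eqxx big1 // => k /negbTE ->. Qed.

Lemma excess_triangle x y z : excess x z <= excess x y + excess y z.
Proof. by rewrite -big_split; apply: leq_sum => k _ /=; lia. Qed.

Lemma excess_ge x y k : x k - y k <= excess x y.
Proof. by rewrite /excess (bigD1 k) //= leq_addr. Qed.

Lemma excess_eq0 x y : excess x y = 0 -> excess y x = 0 -> x = y.
Proof.
move=> Exy Eyx; apply/ffunP => k.
have := excess_ge x y k; have := excess_ge y x k; rewrite Exy Eyx !leqn0 !subn_eq0.
by move=> le_yx le_xy; apply/eqP; rewrite eqn_leq le_xy le_yx.
Qed.

Lemma excess_pos_index x y : 0 < excess x y -> exists i, y i < x i.
Proof.
case: (boolP [exists i, y i < x i]) => [/existsP // | /existsPn Hle].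
rewrite lt0n => /eqP []; rewrite /excess big1 // => k _.
by apply/eqP; rewrite subn_eq0 leqNgt Hle.
Qed.

Lemma excess_sym x y : mcard x = mcard y -> excess x y = excess y x.
Proof.
move=> Ecard.
have : mcard x + excess y x = mcard y + excess x y.
  by rewrite /mcard /excess -!big_split; apply: eq_bigr => k _ /=; lia.
lia.
Qed.

Lemma excess_add_unitr x i : excess x (add_unit x i) = 0.
Proof. by rewrite /excess big1 // => k _; rewrite ffunE; lia. Qed.

Lemma excess_add_unitl x i : excess (add_unit x i) x <= 1.
Proof.
rewrite -(sum_indicator i); apply: leq_sum => k _; rewrite ffunE.
by case: (k == i) => /=; lia.
Qed.

Lemma excess_sub_unitl x i : excess (sub_unit x i) x = 0.
Proof. by rewrite /excess big1 // => k _; rewrite ffunE; lia. Qed.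

Lemma excess_sub_unitr x i : excess x (sub_unit x i) <= 1.
Proof.
rewrite -(sum_indicator i); apply: leq_sum => k _; rewrite ffunE.
by case: (k == i) => /=; lia.
Qed.

Lemma ins_step_excess x y : ins_step x y -> excess x y = 0 /\ excess y x <= 1.
Proof. by case=> i ->; rewrite excess_add_unitr excess_add_unitl. Qed.

Lemma del_step_excess x y : del_step x y -> excess x y <= 1 /\ excess y x = 0.
Proof. by case=> i [_ ->]; rewrite excess_sub_unitr excess_sub_unitl. Qed.

Lemma sub_step_excess x y : sub_step x y -> excess x y <= 1 /\ excess y x <= 1.
Proof.
case=> i [j [_ ->]]; set w := sub_unit x i; split.
- have := excess_triangle x w (add_unit w j).
  by rewrite excess_add_unitr addn0 => /leq_trans; apply; apply: excess_sub_unitr.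
- have := excess_triangle (add_unit w j) w x.
  by rewrite excess_sub_unitl addn0 => /leq_trans; apply; apply: excess_add_unitl.
Qed.

Lemma impaired_excess a b c x z :
  impaired a b c x z -> excess x z <= b + c /\ excess z x <= a + c.
Proof.
elim=> {a b c x z} [a b c x | a b c x y z /ins_step_excess [Exy Eyx] _ [Eyz Ezy]
  | a b c x y z /del_step_excess [Exy Eyx] _ [Eyz Ezy]
  | a b c x y z /sub_step_excess [Exy Eyx] _ [Eyz Ezy]].
- by rewrite /excess big1 // => k _; lia.
all: by have := excess_triangle x y z; have := excess_triangle z y x; lia.
Qed.

Lemma common_output_excess a b c x y z :
  impaired a b c x z -> impaired a b c y z -> excess x y <= a + b + 2 * c.
Proof.
move=> /impaired_excess [Exz _] /impaired_excess [_ Ezy].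
by have := excess_triangle x z y; lia.
Qed.

Lemma mcard_add_unit x i : mcard (add_unit x i) = (mcard x).+1.
Proof.
by rewrite /mcard -addn1 -(sum_indicator i) -big_split; apply: eq_bigr => k _; rewrite ffunE.
Qed.

Lemma mcard_sub_unit x i : 0 < x i -> (mcard (sub_unit x i)).+1 = mcard x.
Proof.
move=> xi_gt0; rewrite /mcard -addn1 -(sum_indicator i) -big_split.
by apply: eq_bigr => k _ /=; rewrite ffunE; case: (eqVneq k i) => [->|_] /=; lia.
Qed.

Lemma excess_dec_at x y x' y' (i : 'I_q) :
  (forall k, k != i -> x' k - y' k = x k - y k) ->
  (x' i - y' i).+1 = x i - y i -> (excess x' y').+1 = excess x y.
Proof.
move=> Eout Ei; rewrite /excess (bigD1 i) // [RHS](bigD1 i) //= -Ei addSn.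
by congr (_ + _).+1; apply: eq_bigr => k; apply: Eout.
Qed.

Section Moves.
Variables (x y : mvec q) (i j : 'I_q).
Hypotheses (Hi : y i < x i) (Hj : x j < y j).

Let neq_ij : (i == j) = false.
Proof. by apply/negbTE/eqP => Eij; move: Hi Hj; rewrite Eij; lia. Qed.

Lemma excess_subst_move : (excess (add_unit (sub_unit x i) j) y).+1 = excess x y.
Proof.
apply: (@excess_dec_at _ _ _ _ i) => [k /negbTE ki|]; rewrite !ffunE ?ki ?eqxx ?neq_ij /=; last lia.
by case: (eqVneq k j) => [->|_] /=; lia.
Qed.

Lemma excess_ins_move : (excess (add_unit x j) (add_unit y i)).+1 = excess x y.
Proof.
apply: (@excess_dec_at _ _ _ _ i) => [k /negbTE ki|]; rewrite !ffunE ?ki ?eqxx ?neq_ij /=; last lia.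
by case: (eqVneq k j) => [->|_] /=; lia.
Qed.

Lemma excess_del_move : (excess (sub_unit x i) (sub_unit y j)).+1 = excess x y.
Proof.
apply: (@excess_dec_at _ _ _ _ i) => [k /negbTE ki|]; rewrite !ffunE ?ki ?eqxx ?neq_ij /=; last lia.
by case: (eqVneq k j) => [->|_] /=; lia.
Qed.

End Moves.

Lemma impaired_common_output a b c x y :
  mcard x = mcard y -> excess x y <= a + b + 2 * c ->
  exists z, impaired a b c x z /\ impaired a b c y z.
Proof.
move Exy: (excess x y) => d; elim/ltn_ind: d a b c x y Exy => d IH a b c x y Exy Ecard Hd.
have [d0 | d_gt0] := posnP d.
  have Exy0 : excess x y = 0 by rewrite Exy.
  have Eyx0 : excess y x = 0 by rewrite -excess_sym.
  by exists x; rewrite -(excess_eq0 Exy0 Eyx0); split; apply: imp_refl.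
have [i Hi] : exists i, y i < x i by apply: excess_pos_index; rewrite Exy.
have [j Hj] : exists j, x j < y j by apply: excess_pos_index; rewrite -excess_sym // Exy.
have xi_gt0 : 0 < x i by lia.
have yj_gt0 : 0 < y j by lia.
case: c Hd => [|c] Hd; [case: a Hd => [|a] Hd|].
- case: b Hd => [|b] Hd; first lia.
  have Ecard' : mcard (sub_unit x i) = mcard (sub_unit y j).
    by have := mcard_sub_unit xi_gt0; have := mcard_sub_unit yj_gt0; lia.
  have Exy' : excess (sub_unit x i) (sub_unit y j) = d.-1.
    by have := excess_del_move Hi Hj; lia.
  have [|z [Hxz Hyz]] := IH d.-1 _ 0 b 0 _ _ Exy' Ecard' (ltac:(lia)); first lia.
  by exists z; split; [apply: imp_del Hxz; exists i | apply: imp_del Hyz; exists j].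
- have Ecard' : mcard (add_unit x j) = mcard (add_unit y i).
    by rewrite !mcard_add_unit Ecard.
  have Exy' : excess (add_unit x j) (add_unit y i) = d.-1.
    by have := excess_ins_move Hi Hj; lia.
  have [|z [Hxz Hyz]] := IH d.-1 _ a b 0 _ _ Exy' Ecard' (ltac:(lia)); first lia.
  by exists z; split; [apply: imp_ins Hxz; exists j | apply: imp_ins Hyz; exists i].
- pose x' := add_unit (sub_unit x i) j.
  have sub_x : sub_step x x' by exists i, j.
  have Ecard' : mcard x' = mcard y.
    by rewrite mcard_add_unit -Ecard -(mcard_sub_unit xi_gt0).
  have Ex'y : (excess x' y).+1 = d by rewrite -Exy; exact: excess_subst_move Hi Hj.
  have [d1 | d_gt1] := leqP d 1.
    have Ex'y0 : excess x' y = 0 by lia.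
    have Eyx'0 : excess y x' = 0 by rewrite -excess_sym.
    exists y; split; last exact: imp_refl.
    by apply: imp_sub sub_x _; rewrite (excess_eq0 Ex'y0 Eyx'0); apply: imp_refl.
  have [i' Hi'] : exists i', y i' < x' i' by apply: excess_pos_index; lia.
  have [j' Hj'] : exists j', x' j' < y j'.
    by apply: excess_pos_index; rewrite -excess_sym //; lia.
  pose y' := add_unit (sub_unit y j') i'.
  have sub_y : sub_step y y' by exists j', i'; split => //; lia.
  have Ecard'' : mcard x' = mcard y'.
    by rewrite Ecard' mcard_add_unit mcard_sub_unit //; lia.
  have Ey'x' : (excess y' x').+1 = excess y x' := excess_subst_move Hj' Hi'.
  have Ex'y' : excess x' y' = d.-2.
    by rewrite (excess_sym Ecard''); have := excess_sym Ecard'; lia.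
  have [|z [Hxz Hyz]] := IH d.-2 _ a b c _ _ Ex'y' Ecard'' (ltac:(lia)); first lia.
  by exists z; split; [apply: imp_sub sub_x Hxz | apply: imp_sub sub_y Hyz].
Qed.

End Excess.

Lemma can_correct_excessP q (C : mvec q -> Prop) a b c :
  (forall x y, C x -> C y -> mcard x = mcard y) ->
  can_correct C a b c <->
  forall x y, C x -> C y -> x <> y -> a + b + 2 * c < excess x y.
Proof.
move=> Ecard; split=> [Hcorr x y Cx Cy nxy | Hdist x y z Cx Cy nxy Hxz Hyz].
- rewrite ltnNge; apply/negP => Hle.
  have [z [Hxz Hyz]] := impaired_common_output (Ecard x y Cx Cy) Hle.
  exact: Hcorr Cx Cy nxy Hxz Hyz.
- by have := common_output_excess Hxz Hyz; have := Hdist x y Cx Cy nxy; lia.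
Qed.

Theorem mainTheorem1 (q n : nat) (hq : 2 <= q) (hn : 1 <= n)
  (C : mvec q -> Prop) (HC : multiset_code n C)
  (h_ins h_del h_sub : nat) :
  let h := h_ins + h_del + 2 * h_sub in
  (can_correct C h_ins h_del h_sub <-> can_correct C h 0 0) /\
  (can_correct C h 0 0 <-> can_correct C 0 h 0).
Proof.
move=> h; have [in_simplexC _] := HC.
have Ecard x y : C x -> C y -> mcard x = mcard y.
  by move=> /in_simplexC Cx /in_simplexC Cy; rewrite /mcard Cx Cy.
rewrite !(can_correct_excessP _ _ _ Ecard) /h.
by split; split => Hdist x y Cx Cy nxy; have := Hdist x y Cx Cy nxy; lia.
Qed.
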